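(* In the setting below, suppose that $\tau_I = 0$ for all macrostates $I$ and that the augmented Markov kernel satisfies $$T(x,I,s;dy,J,t) = \int \eta_I(dz)\, T(z,I,\tau_I;dy,J,t)$$ for all $(x,I,s)$, $(dy,J,t)$. Then the memory kernel matrices satisfy $\mathcal K(n\tau) = 0$ for all integers $n>1$.
   Context: $X(t)$ is a Markov process on microstates partitioned into finitely many macrostates, with macroscopic time step $\tau>0$, decorrelation times $\tau_I$, and quasistationary distribution $\eta_I$ in each macrostate $I$ (i.e. $\eta_I(\cdot)=\int\eta_I(dx)\mathbb P(X(t)\in\cdot\mid X(0)=x,\ X(s)\in I,\ s\le t)$). The jump process $R(t)$ (at multiples of $\tau$) jumps from its current macrostate $I$ to $J\ne I$ at time $t$ iff $X(t-c)\in J$ for $0\le c\le\tau_J$. $C(t)$ is the consecutive time $X(t)$ has spent in its current macrostate, stopped at $\tau_J$ if $X(t)\in J$. $T(x,I,s;dy,J,t)=\mathbb P^{x,I,s}[(X(\tau),R(\tau),C(\tau))\in(dy,J,t)]$ is the one-step kernel of the augmented chain $(X,R,C)$, acting on functions by $Tf(x,I,s)=\int\sum_{J,t}T(x,I,s;dy,J,t)f(y,J,t)$. The projector $P$ is $Pf(x,I,s)=\int\eta_I(dz)f(z,I,\tau_I)$, $Q=\mathrm{Id}-P$, $\chi_J(x,I,s)=\delta_{I=J}$, and the memory kernel matrices are $\mathcal K_{IJ}(n\tau) = PT(QT)^{n-1}\chi_J(x,I,s)$ for $n\ge1$. *)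

From HB Require Import structures.
From mathcomp Require Import all_boot all_order all_algebra.
From mathcomp Require Import all_classical all_reals all_analysis.
From mathcomp Require Import measurable_realfun lebesgue_integral kernel.
Set Implicit Arguments. Unset Strict Implicit. Unset Printing Implicit Defensive.
Import Order.TTheory GRing.Theory Num.Theory.
Local Open Scope classical_set_scope.
Local Open Scope ring_scope.

(* Augmented state space: (x, I, s) with x : X a microstate, I : M a macrostate,
   s : R the clock value.  The one-step kernel of the augmented chain
   (X, R, C) is given, for each starting point (x, I, s) and each target
   macrostate J, by a measure T x I s J on X * R (variables (dy, dt)):
      T(x,I,s; dy, J, t)  =  T x I s J (dy, dt). *)

Section Ops.
Context {d : measure_display} {X : measurableType d} {R : realType} {M : finType}.

Definition aug_kernel := X -> M -> R -> M -> {measure set (X * R)%type -> \bar R}.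

Definition Top (T : aug_kernel) (f : X -> M -> R -> R) : X -> M -> R -> R :=
  fun x I s => \sum_(J : M) fine (\int[T x I s J]_(w in setT) (f w.1 J w.2)%:E)%E.

Definition Pop (eta : M -> probability X R) (tauI : M -> R)
  (f : X -> M -> R -> R) : X -> M -> R -> R :=
  fun _ I _ => fine (\int[eta I]_(z in setT) (f z I (tauI I))%:E)%E.

Definition Qop eta tauI (f : X -> M -> R -> R) : X -> M -> R -> R :=
  fun x I s => f x I s - Pop eta tauI f x I s.

Definition chi (J : M) : X -> M -> R -> R := fun _ I _ => (I == J)%:R.

(* K_{IJ}(n tau) evaluated at (x,I,s) := (P T (Q T)^(n-1) chi_J)(x,I,s), n >= 1 *)
Definition memK (T : aug_kernel) eta tauI (n : nat) (I J : M) (x : X) (s : R) : R :=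
  Pop eta tauI (Top T (iter n.-1 (fun g => Qop eta tauI (Top T g)) (chi J))) x I s.

End Ops.

From HB Require Import structures.
From mathcomp Require Import all_boot all_order all_algebra.
From mathcomp Require Import all_classical all_reals all_analysis.
From mathcomp Require Import measurable_realfun lebesgue_integral kernel.
Import Order.TTheory GRing.Theory Num.Theory.
Local Open Scope classical_set_scope.
Local Open Scope ring_scope.

(* If the one-step kernel forgets the microstate and the clock, so does every
   [T f]; averaging such a function against the probability [eta_I] leaves it
   unchanged, hence [Q T = 0] and every term [P T (Q T)^(n-1) chi_J] with
   [n > 1] vanishes. *)

Section MemoryKernel.
Context {d : measure_display} {X : measurableType d} {R : realType} {M : finType}.
Variables (eta : M -> probability X R) (tauI : M -> R).

Lemma Pop_indep (f : X -> M -> R -> R) :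
  (forall x x' I s s', f x I s = f x' I s') ->
  forall x I s, Pop eta tauI f x I s = f x I s.
Proof.
move=> f_indep x I s; rewrite /Pop.
under eq_integral => z _ do rewrite (f_indep z x I (tauI I) s).
by rewrite integral_cst //= probability_setT mule1.
Qed.

Lemma Qop_indep (f : X -> M -> R -> R) :
  (forall x x' I s s', f x I s = f x' I s') ->
  forall x I s, Qop eta tauI f x I s = 0.
Proof. by move=> f_indep x I s; rewrite /Qop Pop_indep // subrr. Qed.

Lemma Pop0 : Pop eta tauI (fun _ _ _ => 0) = fun _ _ _ => 0.
Proof.
apply/funext => x; apply/funext => I; apply/funext => s.
by rewrite /Pop integral0.
Qed.

Variable T : @aug_kernel d X R M.

Lemma Top0 : Top T (fun _ _ _ => 0) = fun _ _ _ => 0.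
Proof.
apply/funext => x; apply/funext => I; apply/funext => s.
by rewrite /Top big1 // => J _; rewrite integral0.
Qed.

Hypothesis T_indep : forall x x' I s s' J (A : set (X * R)%type),
  measurable A -> T x I s J A = T x' I s' J A.

Lemma Top_indep (f : X -> M -> R -> R) x x' I s s' :
  Top T f x I s = Top T f x' I s'.
Proof.
rewrite /Top; apply: eq_bigr => J _; congr fine.
by apply: eq_measure_integral => A mA _; apply: T_indep.
Qed.

Lemma QopTop (f : X -> M -> R -> R) :
  Qop eta tauI (Top T f) = fun _ _ _ => 0.
Proof.
apply/funext => x; apply/funext => I; apply/funext => s.
by apply: Qop_indep; apply: Top_indep.
Qed.

Lemma memK_eq0 n I J x s : (1 < n)%N -> memK T eta tauI n I J x s = 0.
Proof.
case: n => [|[|m]] // _.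
by rewrite /memK iterS QopTop Top0 Pop0.
Qed.

End MemoryKernel.

Theorem theorem3 (d : measure_display) (X : measurableType d) (R : realType)
  (M : finType) (tau : R) (tauI : M -> R) (eta : M -> probability X R)
  (T : X -> M -> R -> M -> {measure set (X * R)%type -> \bar R})
  (tau_pos : 0 < tau)
  (T_meas : forall (I : M) (s : R) (J : M) (A : set (X * R)%type),
      measurable A -> measurable_fun [set: X] (fun x : X => T x I s J A : \bar R))
  (T_prob : forall (x : X) (I : M) (s : R),
      (\sum_(J : M) T x I s J setT)%E = 1%E)
  (tauI0 : forall I : M, tauI I = 0)
  (HT : forall (x : X) (I : M) (s : R) (J : M) (A : set (X * R)%type),
      measurable A ->
      T x I s J A = (\int[eta I]_(z in setT) T z I (tauI I) J A)%E) :
  forall n : nat, (1 < n)%N ->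
  forall (I J : M) (x : X) (s : R), memK T eta tauI n I J x s = 0.
Proof.
move=> n n_gt1 I J x s; apply: memK_eq0 => // x1 x2 I' s1 s2 J' A mA.
by rewrite !HT.
Qed.
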